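(* Assume that the linear program $$\min_{q\ge0}\sum_{s,a}q(s,a)c(s,a)\ \text{ s.t. }\ \sum_{a}q(s,a)=1+\sum_{s'\in\mathcal S,a}q(s',a)\hat P(s|s',a)\ \ \forall s\in\mathcal S$$ has a feasible solution. Then the optimal value of Program (A) $$\max_{x\in\mathbb{R}^N}\sum_{s\in\mathcal S}x_s\ \text{ s.t. }\ x_s\le c(s,a)+\sum_{s'}\hat P(s'|s,a)x_{s'}+\mathrm{CB}_{\min}(s,a)(x)\ \ \forall s\in\mathcal S,a\in\mathcal A(s)$$ equals the optimal value of Program (B) $$\min_{q\ge 0,\ \tilde P}\ \sum_{s,a}q(s,a)c(s,a)\ \text{ s.t. }\ \tilde P(\cdot|s,a)\in\mathcal P_\epsilon(s,a)\ \forall (s,a),\quad \sum_a q(s,a)=1+\sum_{s',a}q(s',a)\tilde P(s|s',a)\ \ \forall s\in\mathcal S,$$ i.e. there is no duality gap between (A) and (B).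
   Context: SSP setting with finite states $\mathcal S=\{1,\dots,N\}$, finite action sets $\mathcal A(s)$, known costs $c(s,a)\in[0,1]$, and an estimated substochastic transition function $\hat P(s'|s,a)\ge0$, $\sum_{s'\in\mathcal S}\hat P(s'|s,a)\le 1$. Let $\Delta_{\mathcal S}=\{p\in\mathbb{R}^{\mathcal S}: p\ge0,\ \sum_{s'}p_{s'}\le1\}$. Let $D:\mathbb{R}_{\ge0}^{\mathcal S}\times\mathbb{R}_{\ge0}^{\mathcal S}\to[0,\infty)$ be jointly convex, with $D(p,p)=0$, and positively homogeneous: $D(\alpha p,\alpha p')=\alpha D(p,p')$ for all $\alpha\ge0$. Let $\epsilon(s,a)>0$. Define $\mathcal P_\epsilon(s,a)=\{\tilde p\in\Delta_{\mathcal S}: D(\tilde p,\hat P(\cdot|s,a))\le\epsilon(s,a)\}$ and, for $x\in\mathbb{R}^N$, $\mathrm{CB}_{\min}(s,a)(x)=\min_{\tilde p\in\mathcal P_\epsilon(s,a)}\sum_{s'\in\mathcal S}(\tilde p_{s'}-\hat P(s'|s,a))x_{s'}$. *)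

From HB Require Import structures.
From mathcomp Require Import all_boot all_order all_algebra.
From mathcomp Require Import all_classical all_reals all_analysis.
Set Implicit Arguments. Unset Strict Implicit. Unset Printing Implicit Defensive.
Import Order.TTheory GRing.Theory Num.Theory.
Local Open Scope classical_set_scope.
Local Open Scope ring_scope.

Section SSPDefs.
Variables (R : realType) (S Act : finType).

Definition nonneg_vec (p : S -> R) : Prop := forall s, 0 <= p s.

Definition subdist (p : S -> R) : Prop := nonneg_vec p /\ \sum_(s' : S) p s' <= 1.

Definition jointly_convex (D : (S -> R) -> (S -> R) -> R) : Prop :=
  forall (p1 p1' p2 p2' : S -> R) (t : R),
    nonneg_vec p1 -> nonneg_vec p1' -> nonneg_vec p2 -> nonneg_vec p2' ->
    0 <= t -> t <= 1 ->
    D (fun s => t * p1 s + (1 - t) * p2 s) (fun s => t * p1' s + (1 - t) * p2' s)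
      <= t * D p1 p1' + (1 - t) * D p2 p2'.

Definition pos_homogeneous (D : (S -> R) -> (S -> R) -> R) : Prop :=
  forall (alpha : R) (p p' : S -> R), 0 <= alpha -> nonneg_vec p -> nonneg_vec p' ->
    D (fun s => alpha * p s) (fun s => alpha * p' s) = alpha * D p p'.

Variables (A : S -> {set Act}) (c : S -> Act -> R) (Phat : S -> Act -> S -> R)
  (D : (S -> R) -> (S -> R) -> R) (eps : S -> Act -> R).

Definition Peps (s : S) (a : Act) : set (S -> R) :=
  [set p | subdist p /\ D p (Phat s a) <= eps s a].

(* CB_min(s,a)(x): the minimum, taken as the infimum *)
Definition CBmin (s : S) (a : Act) (x : S -> R) : R :=
  inf [set \sum_(s' : S) (p s' - Phat s a s') * x s' | p in Peps s a].

Definition occupancy_feasible (P : S -> Act -> S -> R) (q : S -> Act -> R) : Prop :=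
  (forall s a, a \in A s -> 0 <= q s a) /\
  (forall s, \sum_(a in A s) q s a
             = 1 + \sum_(s' : S) \sum_(a in A s') q s' a * P s' a s).

Definition LP_feasible : Prop := exists q, occupancy_feasible Phat q.

Definition feasA : set (S -> R) :=
  [set x | forall s a, a \in A s ->
     x s <= c s a + \sum_(s' : S) Phat s a s' * x s' + CBmin s a x].

Definition valueA : \bar R :=
  ereal_sup [set (\sum_(s : S) x s)%:E | x in feasA].

Definition feasB : set ((S -> Act -> R) * (S -> Act -> S -> R)) :=
  [set qP | (forall s a, a \in A s -> Peps s a (qP.2 s a)) /\
            occupancy_feasible qP.2 qP.1].

Definition valueB : \bar R :=
  ereal_inf [set (\sum_(s : S) \sum_(a in A s) qP.1 s a * c s a)%:E | qP in feasB].

End SSPDefs.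

From HB Require Import structures.
From mathcomp Require Import all_boot all_order all_algebra.
From mathcomp Require Import all_classical all_reals all_analysis.
From mathcomp Require Import ring lra.

(* Weak duality: summing the constraints of (A) against an occupancy measure feasible for (B)
   telescopes to [sum_s x s <= cost].
   Conversely, let T be the robust Bellman operator
   [T x s = min_(a in A s) (c s a + min_(p in P_eps(s,a)) p . x)].  A feasible occupancy measure
   of the nominal program induces a stationary policy whose nominal cost J satisfies [T J <= J],
   so the iterates [T^k J] decrease to some L with [L <= T L], a feasible point of (A).  Following
   for n steps actions and laws that are near-optimal for [T^(n-1) J, ..., J], and the stationary
   policy afterwards, gives a feasible point of (B) of cost about [sum_s (T^n J) s]: its flows
   stay in the cones over the sets P_eps(s,a), which are closed under addition because D is
   jointly convex and positively homogeneous.  Letting n grow gives val(B) <= sum L <= val(A). *)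

Set Implicit Arguments. Unset Strict Implicit.
Import Order.TTheory GRing.Theory Num.Theory.
Local Open Scope classical_set_scope.
Local Open Scope ring_scope.

Section RealFacts.
Variable R : realType.

Lemma ler_addgt0_scaled (x y C : R) :
  0 <= C -> (forall e, 0 < e -> x <= y + e * C) -> x <= y.
Proof.
move=> C0 h; apply/ler_addgt0Pr => e e0.
have eC : 0 < e / (C + 1) by rewrite divr_gt0 //; lra.
apply: (le_trans (h _ eC)); rewrite lerD2l -mulrA ler_piMr ?(ltW e0) //.
by rewrite ler_pdivrMl; lra.
Qed.

Lemma lerN_norm_mulB (a b x : R) : 0 <= a <= 1 -> 0 <= b <= 1 -> - `|x| <= (a - b) * x.
Proof.
move=> /andP[a0 a1] /andP[b0 b1].
by case: (lerP 0 x) => hx; [rewrite ger0_norm | rewrite ltr0_norm]; nra.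
Qed.

Lemma sum_pick (I : finType) (B : {set I}) (b : I) (F : I -> R) : b \in B ->
  \sum_(a in B) (if b == a then F a else 0) = F b.
Proof.
move=> bB; rewrite -big_mkcondr (big_pred1 b) // => a /=.
by rewrite eq_sym; case: eqP => [->|]; rewrite ?bB ?andbF.
Qed.

End RealFacts.

Section Vectors.
Variables (R : realType) (S : finType).

Lemma ler_sum_term (F : S -> R) s0 : (forall s, 0 <= F s) -> F s0 <= \sum_s F s.
Proof. by move=> F0; rewrite (bigD1 s0) //= lerDl sumr_ge0. Qed.

Lemma subdist_bounds (p : S -> R) s : subdist p -> 0 <= p s <= 1.
Proof. by move=> [p0 p1]; rewrite p0 (le_trans _ p1) // ler_sum_term. Qed.

Lemma nonincreasing_uniform_limit (u : nat -> S -> R) (B : R) :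
  (forall k s, u k.+1 s <= u k s) -> (forall k s, B <= u k s) ->
  exists L : S -> R, (forall k s, L s <= u k s) /\
    (forall e, 0 < e -> exists k, forall s, u k s <= L s + e).
Proof.
move=> u_dec u_ge.
have u_inf s : has_inf (range (u^~ s)).
  by split; [exists (u 0%N s), 0%N | exists B => _ [k _ <-]].
exists (fun s => inf (range (u^~ s))); split.
  by move=> k s; apply: ge_inf; [case: (u_inf s) | exists k].
move=> e e0.
have /boolp.choice [k hk] : forall s, exists k, u k s <= inf (range (u^~ s)) + e.
  by move=> s; have [_ [k _ <-] /ltW] := inf_adherent e0 (u_inf s); exists k.
exists (\max_s k s)%N => s; apply: le_trans (hk s).
have u_mono := homo_leq (r := fun x y => y <= x) (@lexx _ _)
  (fun y x z hxy hyz => le_trans hyz hxy) (u_dec^~ s).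
by apply: u_mono; apply: leq_bigmax.
Qed.

Lemma nondecreasing_uniform_limit (u : nat -> S -> R) (B : R) :
  (forall k s, u k s <= u k.+1 s) -> (forall k s, u k s <= B) ->
  exists L : S -> R, (forall k s, u k s <= L s) /\
    (forall e, 0 < e -> exists k, forall s, L s <= u k s + e).
Proof.
move=> u_inc u_le.
have [L [Lle Lapprox]] := @nonincreasing_uniform_limit (fun k s => - u k s) (- B)
  (fun k s => ltac:(by rewrite lerN2)) (fun k s => ltac:(by rewrite lerN2)).
exists (fun s => - L s); split; first by move=> k s; rewrite lerNr.
move=> e /Lapprox[k hk]; exists k => s; have := hk s; lra.
Qed.

Lemma fixpoint_adjoint_sum (K : S -> S -> R) (nu mu f J : S -> R) :
  (forall s, nu s = mu s + \sum_s' K s' s * nu s') ->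
  (forall s, J s = f s + \sum_s' K s s' * J s') ->
  \sum_s nu s * f s = \sum_s mu s * J s.
Proof.
move=> hnu hJ.
have swap : \sum_s (\sum_s' K s' s * nu s') * J s = \sum_s nu s * \sum_s' K s s' * J s'.
  under eq_bigr do rewrite mulr_suml.
  rewrite exchange_big /=; apply: eq_bigr => s _; rewrite mulr_sumr.
  by apply: eq_bigr => s' _; ring.
have -> : \sum_s mu s * J s = \sum_s nu s * J s - \sum_s (\sum_s' K s' s * nu s') * J s.
  by rewrite -sumrB; apply: eq_bigr => s _; rewrite (hnu s); ring.
by rewrite swap -sumrB; apply: eq_bigr => s _; rewrite (hJ s); ring.
Qed.

Lemma nonneg_fixpoint (K : S -> S -> R) (w f : S -> R) :
  (forall s s', 0 <= K s s') -> (forall s, 0 <= w s) ->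
  (forall s, w s = 1 + \sum_s' K s' s * w s') -> (forall s, 0 <= f s) ->
  exists2 v : S -> R, (forall s, 0 <= v s) & (forall s, v s = f s + \sum_s' K s s' * v s').
Proof.
move=> K0 w0 hw f0.
pose step (v : S -> R) s := f s + \sum_s' K s s' * v s'.
pose v k := iter k step (fun _ => 0).
have vS k s : v k.+1 s = f s + \sum_s' K s s' * v k s' by [].
have v0 k s : 0 <= v k s.
  elim: k s => [|k IH] s //; rewrite vS addr_ge0 // sumr_ge0 // => s' _.
  exact: mulr_ge0.
have v_inc k s : v k s <= v k.+1 s.
  elim: k s => [|k IH] s; first exact: v0.
  by rewrite (vS k.+1) vS lerD2l ler_sum // => s' _; rewrite ler_wpM2l.
have v_le k s : v k s <= \sum_s w s * f s.
  (* summed against [w], the slacks [v_k - K v_k <= f] telescope to [sum v_k] *)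
  have hv s' : v k s' =
      (v k s' - \sum_s'' K s' s'' * v k s'') + \sum_s'' K s' s'' * v k s'' by ring.
  apply: (le_trans (ler_sum_term s (v0 k))).
  have -> : \sum_s v k s = \sum_s w s * (v k s - \sum_s' K s s' * v k s').
    by rewrite (fixpoint_adjoint_sum hw hv); apply: eq_bigr => s' _; rewrite mul1r.
  by apply: ler_sum => s' _; rewrite ler_wpM2l // lerBlDr -vS.
have [L [Lge Lapprox]] := nondecreasing_uniform_limit v_inc v_le.
have K_sum0 s : 0 <= \sum_s' K s s' by exact: sumr_ge0.
exists L => [s|s]; first exact: le_trans (v0 0%N s) (Lge 0%N s).
apply/eqP; rewrite eq_le; apply/andP; split.
- apply/ler_addgt0Pr => e /Lapprox[k hk]; apply: (le_trans (hk s)).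
  rewrite lerD2r (le_trans (v_inc k s)) // vS lerD2l.
  by apply: ler_sum => s' _; rewrite ler_wpM2l.
- apply: (ler_addgt0_scaled (K_sum0 s)) => e /Lapprox[k hk].
  apply: (@le_trans _ _ (v k.+1 s + e * \sum_s' K s s')); last by rewrite lerD2r.
  rewrite vS -addrA lerD2l mulr_sumr -big_split /=.
  by apply: ler_sum => s' _; rewrite [e * _]mulrC -mulrDr ler_wpM2l.
Qed.

Lemma jointly_convex_subadditive (D : (S -> R) -> (S -> R) -> R) :
  jointly_convex D -> pos_homogeneous D ->
  forall p1 p1' p2 p2', nonneg_vec p1 -> nonneg_vec p1' -> nonneg_vec p2 -> nonneg_vec p2' ->
  D (fun s => p1 s + p2 s) (fun s => p1' s + p2' s) <= D p1 p1' + D p2 p2'.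
Proof.
move=> D_conv D_hom p1 p1' p2 p2' n1 n1' n2 n2'.
pose mid (u u' : S -> R) s := 2^-1 * u s + (1 - 2^-1) * u' s.
have mid_ge0 p p' : nonneg_vec p -> nonneg_vec p' -> nonneg_vec (mid p p').
  by move=> np np' s; rewrite addr_ge0 ?mulr_ge0 // subr_ge0 invf_le1 // ler1n.
have twice p p' : (fun s => p s + p' s) = (fun s => 2 * mid p p' s).
  by apply: boolp.funext => s; rewrite /mid; field.
rewrite twice (twice p1') D_hom ?ler0n //; [|exact: mid_ge0..].
have : D (mid p1 p2) (mid p1' p2') <= 2^-1 * D p1 p1' + (1 - 2^-1) * D p2 p2'.
  by apply: D_conv => //; lra.
lra.
Qed.

End Vectors.

Section Occupancy.
Variables (R : realType) (S Act : finType) (A : S -> {set Act})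
  (P : S -> Act -> S -> R) (q : S -> Act -> R).
Hypothesis q_occ : occupancy_feasible A P q.

Lemma occupancy_actions_nonempty :
  (forall s a, nonneg_vec (P s a)) -> forall s, exists a, a \in A s.
Proof.
move=> P_ge0 s; have [a a_in|A0] := pickP (mem (A s)); first by exists a.
have := q_occ.2 s; rewrite big_pred0 //.
have : 0 <= \sum_s' \sum_(a in A s') q s' a * P s' a s.
  apply: sumr_ge0 => s' _; apply: sumr_ge0 => a a_in.
  by apply: mulr_ge0; [exact: q_occ.1 | exact: P_ge0].
lra.
Qed.

Lemma occupancy_telescope (x : S -> R) :
  \sum_s \sum_(a in A s) q s a * (x s - \sum_s' P s a s' * x s') = \sum_s x s.
Proof.
have flow : \sum_s \sum_(a in A s) q s a * \sum_s' P s a s' * x s' =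
    \sum_s' x s' * \sum_s \sum_(a in A s) q s a * P s a s'.
  under eq_bigr do under eq_bigr do rewrite mulr_sumr.
  under eq_bigr do rewrite exchange_big /=.
  rewrite exchange_big /=; apply: eq_bigr => s' _.
  rewrite mulr_sumr; apply: eq_bigr => s _; rewrite mulr_sumr.
  by apply: eq_bigr => a _; ring.
under eq_bigr do under eq_bigr do rewrite mulrBr.
under eq_bigr do rewrite sumrB.
rewrite sumrB flow -sumrB; apply: eq_bigr => s _.
by rewrite -mulr_suml q_occ.2; ring.
Qed.

End Occupancy.

Section RobustBellman.
Variables (R : realType) (S Act : finType) (A : S -> {set Act})
  (c : S -> Act -> R) (Phat : S -> Act -> S -> R)
  (D : (S -> R) -> (S -> R) -> R) (eps : S -> Act -> R).
Hypotheses (c_ge0 : forall s a, 0 <= c s a) (Phat_sub : forall s a, subdist (Phat s a))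
  (D_conv : jointly_convex D) (D_diag : forall p, nonneg_vec p -> D p p = 0)
  (D_hom : pos_homogeneous D) (eps_ge0 : forall s a, 0 <= eps s a).

Local Notation Pe := (Peps Phat D eps).

Lemma Phat_Peps s a : Pe s a (Phat s a).
Proof. by split; rewrite ?D_diag //; case: (Phat_sub s a). Qed.

Lemma bonus_has_inf s a (x : S -> R) :
  has_inf [set \sum_s' (p s' - Phat s a s') * x s' | p in Pe s a].
Proof.
split; first by exists (\sum_s' (Phat s a s' - Phat s a s') * x s'), (Phat s a);
  first exact: Phat_Peps.
exists (- \sum_s' `|x s'|) => _ [p [p_sub _] <-].
by rewrite -sumrN; apply: ler_sum => s' _; apply: lerN_norm_mulB; exact: subdist_bounds.
Qed.

Lemma sum_subr_mul (p p' x : S -> R) :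
  \sum_s (p s - p' s) * x s = \sum_s p s * x s - \sum_s p' s * x s.
Proof. by rewrite -sumrB; apply: eq_bigr => s _; rewrite mulrBl. Qed.

(* The robust expectation [min_(p in P_eps(s,a)) p . x]: CB_min is its gap to the nominal one. *)
Definition rexp s a x := \sum_s' Phat s a s' * x s' + CBmin Phat D eps s a x.

Lemma rexp_le s a x p : Pe s a p -> rexp s a x <= \sum_s' p s' * x s'.
Proof.
move=> p_in; have : CBmin Phat D eps s a x <= \sum_s' (p s' - Phat s a s') * x s'.
  by apply: ge_inf; [case: (bonus_has_inf s a x) | exists p].
by rewrite /rexp sum_subr_mul; lra.
Qed.

Lemma rexp_approx s a x e : 0 < e ->
  exists2 p, Pe s a p & \sum_s' p s' * x s' < rexp s a x + e.
Proof.
move=> e0; have [_ [p p_in <-]] := inf_adherent e0 (bonus_has_inf s a x).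
by rewrite sum_subr_mul /rexp /CBmin => lt_e; exists p => //; lra.
Qed.

Lemma rexp_shift s a (x y : S -> R) e : 0 <= e -> (forall s', x s' <= y s' + e) ->
  rexp s a x <= rexp s a y + e.
Proof.
move=> e0 le_xy; apply/ler_addgt0Pr => d /(rexp_approx s a y)[p p_in lt_py].
have [p_ge0 p_le1] := p_in.1.
apply: (le_trans (rexp_le x p_in)).
have : \sum_s' p s' * x s' <= \sum_s' p s' * y s' + e.
  apply: (@le_trans _ _ (\sum_s' p s' * (y s' + e))).
    by apply: ler_sum => s' _; rewrite ler_wpM2l.
  under eq_bigr do rewrite mulrDr.
  by rewrite big_split /= lerD2l -mulr_suml ler_piMl.
lra.
Qed.

Lemma rexp_ge0 s a x : nonneg_vec x -> 0 <= rexp s a x.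
Proof.
move=> x_ge0; apply/ler_addgt0Pr => d /(rexp_approx s a x)[p [[p_ge0 _] _]].
have : 0 <= \sum_s' p s' * x s' by apply: sumr_ge0 => s' _; rewrite mulr_ge0.
lra.
Qed.

Definition qval s a x := c s a + rexp s a x.

Lemma feasA_qval x : feasA A c Phat D eps x <-> forall s a, a \in A s -> x s <= qval s a x.
Proof. by rewrite /qval /rexp; split => le_x s a /le_x; rewrite addrA. Qed.

Lemma weak_duality x qP : feasA A c Phat D eps x -> feasB A Phat D eps qP ->
  \sum_s x s <= \sum_s \sum_(a in A s) qP.1 s a * c s a.
Proof.
case: qP => q P /feasA_qval le_x [/= P_in q_occ].
rewrite -(occupancy_telescope q_occ x); apply: ler_sum => s _; apply: ler_sum => a a_in.
apply: ler_wpM2l; first exact: q_occ.1.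
by rewrite lerBlDr (le_trans (le_x s a a_in)) // /qval lerD2l; apply/rexp_le/P_in.
Qed.

Lemma valueA_le_valueB : (valueA A c Phat D eps <= valueB A c Phat D eps)%E.
Proof.
apply: ge_ereal_sup => _ [x x_feas <-]; apply: le_ereal_inf_tmp => _ [qP qP_feas <-].
by rewrite lee_fin weak_duality.
Qed.

Hypothesis A_nonempty : forall s, exists a, a \in A s.

Definition bellman x s := inf [set qval s a x | a in [set a | a \in A s]].

Lemma bellman_has_inf x s : has_inf [set qval s a x | a in [set a | a \in A s]].
Proof.
split; first by have [a a_in] := A_nonempty s; exists (qval s a x), a.
exists (- \sum_a `|qval s a x|) => _ [a _ <-].
rewrite lerNl (le_trans (ler_norm _)) // normrN.
exact: (@ler_sum_term _ _ (fun a => `|qval s a x|) a (fun _ => normr_ge0 _)).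
Qed.

Lemma bellman_le x s a : a \in A s -> bellman x s <= qval s a x.
Proof. by move=> a_in; apply: ge_inf; [case: (bellman_has_inf x s) | exists a]. Qed.

Lemma bellman_approx x s e : 0 < e ->
  exists2 a, a \in A s & qval s a x < bellman x s + e.
Proof. by move=> e0; have [_ [a a_in <-]] := inf_adherent e0 (bellman_has_inf x s); exists a. Qed.

Lemma bellman_shift (x y : S -> R) e s : 0 <= e -> (forall s', x s' <= y s' + e) ->
  bellman x s <= bellman y s + e.
Proof.
move=> e0 le_xy; apply/ler_addgt0Pr => d /(bellman_approx y s)[a a_in lt_ay].
apply: (le_trans (bellman_le x a_in)).
have := rexp_shift s a e0 le_xy; move: lt_ay; rewrite /qval; lra.
Qed.

Lemma bellman_ge0 x s : nonneg_vec x -> 0 <= bellman x s.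
Proof.
move=> x_ge0; apply/ler_addgt0Pr => d /(bellman_approx x s)[a _].
have := rexp_ge0 s a x_ge0; have := c_ge0 s a; rewrite /qval; lra.
Qed.

(* [v] lies in [W * P_eps(s,a)], stated without dividing by [W]: the flows
   [q(s,a) * P(.|s,a)] of a feasible point of (B) are exactly such vectors. *)
Definition Peps_cone s a W (v : S -> R) := [/\ 0 <= W, nonneg_vec v, \sum_s' v s' <= W &
  D v (fun s' => W * Phat s a s') <= W * eps s a].

Lemma Peps_cone_scale s a W p : 0 <= W -> Pe s a p -> Peps_cone s a W (fun s' => W * p s').
Proof.
move=> W_ge0 [[p_ge0 p_le1] D_le]; split => //.
- by move=> s'; rewrite mulr_ge0.
- by rewrite -mulr_sumr ler_piMr.
- by rewrite D_hom ?ler_wpM2l //; case: (Phat_sub s a).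
Qed.

Lemma Peps_cone0 s a : Peps_cone s a 0 (fun _ => 0).
Proof.
have -> : (fun _ => 0) = (fun s' => 0 * Phat s a s') :> (S -> R).
  by apply: boolp.funext => s'; rewrite mul0r.
exact: Peps_cone_scale (lexx 0) (Phat_Peps s a).
Qed.

Lemma Peps_cone_add s a W1 W2 v1 v2 : Peps_cone s a W1 v1 -> Peps_cone s a W2 v2 ->
  Peps_cone s a (W1 + W2) (fun s' => v1 s' + v2 s').
Proof.
move=> [W1_ge0 v1_ge0 v1_le D1] [W2_ge0 v2_ge0 v2_le D2]; split.
- exact: addr_ge0.
- by move=> s'; rewrite addr_ge0.
- by rewrite big_split lerD.
have Phat_ge0 : nonneg_vec (Phat s a) by case: (Phat_sub s a).
have -> : (fun s' => (W1 + W2) * Phat s a s') =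
    (fun s' => W1 * Phat s a s' + W2 * Phat s a s').
  by apply: boolp.funext => s'; rewrite mulrDl.
rewrite mulrDl; apply: le_trans (lerD D1 D2).
by apply: jointly_convex_subadditive => // s'; rewrite mulr_ge0.
Qed.

Lemma Peps_cone_sum (I : Type) (r : seq I) s a (W : I -> R) (v : I -> S -> R) :
  (forall i, Peps_cone s a (W i) (v i)) ->
  Peps_cone s a (\sum_(i <- r) W i) (fun s' => \sum_(i <- r) v i s').
Proof.
move=> v_in; elim: r => [|i r IH].
  have -> : (fun s' => \sum_(i <- [::]) v i s') = (fun _ => 0).
    by apply: boolp.funext => s'; rewrite big_nil.
  by rewrite big_nil; exact: Peps_cone0.
have -> : (fun s' => \sum_(j <- i :: r) v j s') = (fun s' => v i s' + \sum_(j <- r) v j s').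
  by apply: boolp.funext => s'; rewrite big_cons.
by rewrite big_cons; apply: Peps_cone_add.
Qed.

Lemma Peps_cone_normalize s a W v : Peps_cone s a W v -> 0 < W -> Pe s a (fun s' => v s' / W).
Proof.
move=> [_ v_ge0 v_le D_le] W_gt0; split; first split.
- by move=> s'; rewrite divr_ge0 // ltW.
- by rewrite -mulr_suml ler_pdivrMr // mul1r.
have Phat_ge0 : nonneg_vec (Phat s a) by case: (Phat_sub s a).
have -> : (fun s' => v s' / W) = (fun s' => W^-1 * v s').
  by apply: boolp.funext => s'; rewrite mulrC.
have -> : Phat s a = (fun s' => W^-1 * (W * Phat s a s')).
  by apply: boolp.funext => s'; rewrite mulKf // gt_eqF.
rewrite D_hom ?invr_ge0 ?(ltW W_gt0) // ?ler_pdivrMl //.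
by move=> s'; rewrite mulr_ge0 // ltW.
Qed.

Lemma Peps_cone0_eq0 s a v : Peps_cone s a 0 v -> v = fun _ => 0.
Proof.
move=> [_ v_ge0 v_le _]; apply: boolp.funext => s'; apply/eqP.
by rewrite eq_le v_ge0 andbT (le_trans _ v_le) // ler_sum_term.
Qed.

(* Where [q s a = 0] the law is irrelevant and [Phat] is used. *)
Definition flow_kernel (q : S -> Act -> R) (w : S -> Act -> S -> R) s a :=
  if 0 < q s a then (fun s' => w s a s' / q s a) else Phat s a.

Lemma feasB_flow_kernel q w :
  (forall s a, a \in A s -> Peps_cone s a (q s a) (w s a)) ->
  (forall s, \sum_(a in A s) q s a = 1 + \sum_s' \sum_(a in A s') w s' a s) ->
  feasB A Phat D eps (q, flow_kernel q w).
Proof.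
move=> w_in q_flow; split; [|split] => /=.
- move=> s a a_in; rewrite /flow_kernel; case: ifP => [q_gt0|_]; last exact: Phat_Peps.
  exact: Peps_cone_normalize (w_in s a a_in) q_gt0.
- by move=> s a /w_in[].
move=> s; rewrite q_flow; congr (_ + _); apply: eq_bigr => s' _; apply: eq_bigr => a a_in.
rewrite /flow_kernel; case: ifPn => [q_gt0|q_le0]; first by rewrite mulrC mulfVK ?gt_eqF.
have [q_ge0 _ _ _] := w_in s' a a_in.
have q0 : q s' a = 0 by apply/eqP; rewrite eq_le q_ge0 andbT leNgt.
by move: (w_in s' a a_in); rewrite q0 mul0r => /Peps_cone0_eq0 ->.
Qed.

Section Horizon.
Variables (n : nat) (act : nat -> S -> Act) (tr : nat -> S -> S -> R)
  (V : nat -> S -> R) (dl : R).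
Hypotheses (act_in : forall t s, act t s \in A s)
  (tr_in : forall t s, Pe s (act t s) (tr t s))
  (act_greedy : forall t s, (t < n)%N ->
     c s (act t s) + \sum_s' tr t s s' * V t.+1 s' <= V t s + dl)
  (dl_ge0 : 0 <= dl).

(* Mass in each state at time [t] when every state starts with mass 1, as in the
   constraints of (B). *)
Fixpoint visit t : S -> R :=
  if t is t'.+1 then fun s => \sum_s' visit t' s' * tr t' s' s else fun _ => 1.

Lemma visit_ge0 t s : 0 <= visit t s.
Proof.
elim: t s => [|t IH] s /=; first exact: ler01.
by apply: sumr_ge0 => s' _; rewrite mulr_ge0 //; case: (tr_in t s') => -[].
Qed.

Lemma sum_visit_le t : \sum_s visit t s <= #|S|%:R.
Proof.
elim: t => [|t IH]; first by rewrite sumr_const.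
apply: le_trans IH; rewrite exchange_big /=; apply: ler_sum => s' _.
by rewrite -mulr_sumr ler_piMr ?visit_ge0 //; case: (tr_in t s') => -[].
Qed.

Definition horizon_occ s a :=
  \sum_(0 <= t < n) (if act t s == a then visit t s else 0).

Definition horizon_flow s a s' :=
  \sum_(0 <= t < n) (if act t s == a then visit t s * tr t s s' else 0).

Lemma horizon_cone s a : Peps_cone s a (horizon_occ s a) (horizon_flow s a).
Proof.
apply: (@Peps_cone_sum _ _ s a (fun t => if act t s == a then visit t s else 0)
  (fun t s' => if act t s == a then visit t s * tr t s s' else 0)) => t.
case: eqP => [<-|_]; last exact: Peps_cone0.
exact: Peps_cone_scale (visit_ge0 t s) (tr_in t s).
Qed.

Lemma sum_horizon_occ s : \sum_(a in A s) horizon_occ s a = \sum_(0 <= t < n) visit t s.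
Proof.
rewrite exchange_big; apply: eq_bigr => t _.
exact: (sum_pick (fun _ => visit t s) (act_in t s)).
Qed.

Lemma sum_horizon_flow s :
  \sum_s' \sum_(a in A s') horizon_flow s' a s = \sum_(0 <= t < n) visit t.+1 s.
Proof.
transitivity (\sum_s' \sum_(0 <= t < n) visit t s' * tr t s' s); last first.
  by rewrite exchange_big.
apply: eq_bigr => s' _; rewrite exchange_big; apply: eq_bigr => t _.
exact: (sum_pick (fun _ => visit t s' * tr t s' s) (act_in t s')).
Qed.

Lemma horizon_cost : \sum_s \sum_(a in A s) horizon_occ s a * c s a =
  \sum_(0 <= t < n) \sum_s visit t s * c s (act t s).
Proof.
transitivity (\sum_s \sum_(0 <= t < n) visit t s * c s (act t s)); last first.
  by rewrite exchange_big.
apply: eq_bigr => s _; under eq_bigr do rewrite mulr_suml.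
rewrite exchange_big; apply: eq_bigr => t _.
rewrite -(sum_pick (fun a => visit t s * c s a) (act_in t s)); apply: eq_bigr => a _.
by case: (act t s == a); rewrite ?mul0r.
Qed.

Lemma horizon_cost_le : \sum_(0 <= t < n) \sum_s visit t s * c s (act t s) +
  \sum_s visit n s * V n s <= \sum_s V 0 s + dl * n%:R * #|S|%:R.
Proof.
suff telescope t : (t <= n)%N -> \sum_(0 <= i < t) \sum_s visit i s * c s (act i s) +
    \sum_s visit t s * V t s <= \sum_s V 0 s + dl * t%:R * #|S|%:R by exact: telescope.
elim: t => [_|t IH t_lt].
  rewrite big_geq // add0r mulr0 mul0r addr0.
  by apply: ler_sum => s _; rewrite mul1r.
have next : \sum_s visit t.+1 s * V t.+1 s = \sum_s visit t s * \sum_s' tr t s s' * V t.+1 s'.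
  rewrite /=; under eq_bigr do rewrite mulr_suml.
  rewrite exchange_big /=; apply: eq_bigr => s _; rewrite mulr_sumr.
  by apply: eq_bigr => s' _; rewrite mulrA.
have greedy : \sum_s visit t s * c s (act t s) + \sum_s visit t.+1 s * V t.+1 s <=
    \sum_s visit t s * V t s + dl * #|S|%:R.
  rewrite next -big_split /=; apply: (@le_trans _ _ (\sum_s visit t s * (V t s + dl))).
    by apply: ler_sum => s _; rewrite -mulrDr ler_wpM2l ?visit_ge0 ?act_greedy.
  rewrite [leLHS](_ : _ = \sum_s visit t s * V t s + dl * \sum_s visit t s); last first.
    by rewrite mulr_sumr -big_split; apply: eq_bigr => s _; rewrite mulrDr [dl * _]mulrC.
  by rewrite lerD2l ler_wpM2l ?sum_visit_le.
move: greedy (IH (ltnW t_lt)); rewrite big_nat_recr //= -natr1; lra.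
Qed.

End Horizon.

Section StationaryPolicy.
Variable q0 : S -> Act -> R.
Hypothesis q0_occ : occupancy_feasible A Phat q0.

Definition visits0 s := \sum_(a in A s) q0 s a.

Lemma visits0_ge1 s : 1 <= visits0 s.
Proof.
rewrite /visits0 q0_occ.2 lerDl; apply: sumr_ge0 => s' _; apply: sumr_ge0 => a a_in.
by apply: mulr_ge0; [exact: q0_occ.1 | case: (Phat_sub s' a)].
Qed.

Lemma visits0_gt0 s : 0 < visits0 s.
Proof. exact: lt_le_trans ltr01 (visits0_ge1 s). Qed.

Definition pi s a := q0 s a / visits0 s.

Lemma pi_ge0 s a : a \in A s -> 0 <= pi s a.
Proof. by move=> a_in; rewrite divr_ge0 ?(ltW (visits0_gt0 s)) //; exact: q0_occ.1. Qed.

Lemma sum_pi_mul s x : \sum_(a in A s) pi s a * x = x.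
Proof. by rewrite -mulr_suml -mulr_suml divff ?mul1r // gt_eqF ?visits0_gt0. Qed.

Definition Kpi s s' := \sum_(a in A s) pi s a * Phat s a s'.

Lemma Kpi_ge0 s s' : 0 <= Kpi s s'.
Proof.
apply: sumr_ge0 => a a_in; rewrite mulr_ge0 ?pi_ge0 //.
by case: (Phat_sub s a).
Qed.

Lemma visits0_fixpoint s : visits0 s = 1 + \sum_s' Kpi s' s * visits0 s'.
Proof.
rewrite {1}/visits0 q0_occ.2; congr (_ + _); apply: eq_bigr => s' _.
rewrite /Kpi mulr_suml; apply: eq_bigr => a _.
by rewrite /pi mulrAC divfK // gt_eqF ?visits0_gt0.
Qed.

Definition cpi s := \sum_(a in A s) pi s a * c s a.

Lemma cpi_ge0 s : 0 <= cpi s.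
Proof. by apply: sumr_ge0 => a a_in; rewrite mulr_ge0 ?pi_ge0. Qed.

Variables (J w1 : S -> R).
Hypotheses (J_ge0 : nonneg_vec J) (J_fix : forall s, J s = cpi s + \sum_s' Kpi s s' * J s')
  (w1_ge0 : nonneg_vec w1) (w1_fix : forall s, w1 s = 1 + \sum_s' Kpi s s' * w1 s').

Lemma tail_occupancy mu : nonneg_vec mu ->
  exists2 nu : S -> R, nonneg_vec nu & forall s, nu s = mu s + \sum_s' Kpi s' s * nu s'.
Proof. exact: (@nonneg_fixpoint _ _ (fun s s' => Kpi s' s) w1 mu (fun s s' => Kpi_ge0 s' s)). Qed.

Lemma bellman_J_le s : bellman J s <= J s.
Proof.
rewrite [leRHS]J_fix /cpi.
have -> : \sum_s' Kpi s s' * J s' = \sum_(a in A s) pi s a * \sum_s' Phat s a s' * J s'.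
  under eq_bigr do rewrite mulr_suml.
  rewrite exchange_big /=; apply: eq_bigr => a _; rewrite mulr_sumr.
  by apply: eq_bigr => s' _; rewrite mulrA.
rewrite -big_split /= -[bellman J s](sum_pi_mul s) ; apply: ler_sum => a a_in.
rewrite -mulrDr ler_wpM2l ?pi_ge0 // (le_trans (bellman_le J a_in)) // /qval lerD2l.
exact: rexp_le (Phat_Peps s a).
Qed.

Definition viter k := iter k bellman J.

Lemma viter_ge0 k : nonneg_vec (viter k).
Proof. by elim: k => [|k IH] s //=; exact: bellman_ge0. Qed.

Lemma viter_succ_le k s : viter k.+1 s <= viter k s.
Proof.
elim: k s => [|k IH] s; first exact: bellman_J_le.
by rewrite -[leRHS]addr0; apply: bellman_shift => // s'; rewrite addr0; exact: IH.
Qed.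

Lemma viter_limit : exists L : S -> R, feasA A c Phat D eps L /\
  forall e, 0 < e -> exists k, forall s, viter k s <= L s + e.
Proof.
have [L [L_le L_approx]] := nonincreasing_uniform_limit viter_succ_le (fun k s => viter_ge0 k s).
exists L; split => //; apply/feasA_qval => s a a_in.
apply/ler_addgt0Pr => e e_gt0; have [k viter_le] := L_approx e e_gt0.
apply: (le_trans (L_le k.+1 s)); apply: (le_trans (bellman_le _ a_in)).
by rewrite /qval -addrA lerD2l rexp_shift // ltW.
Qed.

Lemma near_greedy dl : 0 < dl -> exists act : nat -> S -> Act, exists tr : nat -> S -> S -> R,
  [/\ forall k s, act k s \in A s, forall k s, Pe s (act k s) (tr k s) &
    forall k s, c s (act k s) + \sum_s' tr k s s' * viter k s' <= viter k.+1 s + dl].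
Proof.
move=> dl_gt0; have dl2 : 0 < dl / 2 by rewrite divr_gt0.
have /boolp.choice[choice greedy] : forall ks : nat * S, exists ap : Act * (S -> R),
    [/\ ap.1 \in A ks.2, Pe ks.2 ap.1 ap.2 &
      c ks.2 ap.1 + \sum_s' ap.2 s' * viter ks.1 s' <= viter ks.1.+1 ks.2 + dl].
  case=> k s; have [a a_in lt_a] := bellman_approx (viter k) s dl2.
  have [p p_in lt_p] := rexp_approx s a (viter k) dl2.
  exists (a, p); split => //=; move: lt_a lt_p; rewrite /qval -/(viter k.+1 s); lra.
exists (fun k s => (choice (k, s)).1), (fun k s => (choice (k, s)).2).
by split=> k s; case: (greedy (k, s)).
Qed.

Lemma finite_horizon_feasB n dl : 0 < dl -> exists2 qP, feasB A Phat D eps qP &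
  \sum_s \sum_(a in A s) qP.1 s a * c s a <= \sum_s viter n s + dl * n%:R * #|S|%:R.
Proof.
move=> dl_gt0; have [act [tr [act_in tr_in greedy]]] := near_greedy dl_gt0.
(* At time [t] follow the rule that is greedy with respect to [viter (n - t.+1)];
   from time [n] on follow the stationary policy [pi]. *)
pose act_t t := act (n - t.+1)%N; pose tr_t t := tr (n - t.+1)%N.
pose V t := viter (n - t).
have greedy_t t s : (t < n)%N ->
    c s (act_t t s) + \sum_s' tr_t t s s' * V t.+1 s' <= V t s + dl.
  by move=> t_lt; rewrite /V -(subnSK t_lt); exact: greedy.
have act_t_in t s : act_t t s \in A s by exact: act_in.
have tr_t_in t s : Pe s (act_t t s) (tr_t t s) by exact: tr_in.
have [nu nu_ge0 nu_fix] := tail_occupancy (visit_ge0 tr_t_in n).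
pose q s a := horizon_occ n act_t tr_t s a + pi s a * nu s.
pose w s a s' := horizon_flow n act_t tr_t s a s' + pi s a * nu s * Phat s a s'.
exists (q, flow_kernel q w).
  apply: feasB_flow_kernel => [s a a_in | s].
    apply: Peps_cone_add; first exact: horizon_cone.
    by apply: Peps_cone_scale; [rewrite mulr_ge0 ?pi_ge0 | exact: Phat_Peps].
  have occ : \sum_(a in A s) q s a = \sum_(0 <= t < n) visit tr_t t s + nu s.
    by rewrite big_split /= (sum_horizon_occ n tr_t act_t_in); congr (_ + _); exact: sum_pi_mul.
  have flow : \sum_s' \sum_(a in A s') w s' a s =
      \sum_(0 <= t < n) visit tr_t t.+1 s + \sum_s' Kpi s' s * nu s'.
    under eq_bigr do rewrite big_split /=.
    rewrite big_split /= (sum_horizon_flow n tr_t act_t_in); congr (_ + _); apply: eq_bigr => s' _.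
    by rewrite /Kpi mulr_suml; apply: eq_bigr => a _; rewrite mulrAC.
  have shift : \sum_(0 <= t < n) visit tr_t t s + visit tr_t n s =
      1 + \sum_(0 <= t < n) visit tr_t t.+1 s by rewrite -big_nat_recr // big_nat_recl.
  by rewrite occ flow; move: (nu_fix s) shift; lra.
have -> : \sum_s \sum_(a in A s) q s a * c s a =
    \sum_s \sum_(a in A s) horizon_occ n act_t tr_t s a * c s a + \sum_s nu s * cpi s.
  rewrite -big_split; apply: eq_bigr => s _; rewrite /cpi mulr_sumr -big_split.
  by apply: eq_bigr => a _; rewrite /q mulrDl mulrCA mulrA.
rewrite (horizon_cost n tr_t act_t_in) (fixpoint_adjoint_sum nu_fix J_fix).
have := horizon_cost_le tr_t_in greedy_t (ltW dl_gt0).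
by rewrite /V subn0 subnn.
Qed.

Lemma valueB_le_valueA : (valueB A c Phat D eps <= valueA A c Phat D eps)%E.
Proof.
have [L [L_feas L_approx]] := viter_limit.
apply: (@le_trans _ _ (\sum_s L s)%:E); last by apply: ereal_sup_ubound; exists L.
apply/lee_addgt0Pr => e e_gt0.
pose N : R := #|S|%:R; have N_ge0 : 0 <= N by exact: ler0n.
pose e1 := e / (2 * N + 1); have e1_gt0 : 0 < e1 by rewrite divr_gt0 //; lra.
have [k viter_le] := L_approx e1 e1_gt0.
pose dl := e1 / (k%:R + 1); have dl_gt0 : 0 < dl by rewrite divr_gt0 // ltr_pwDr.
have [qP qP_feas cost_le] := finite_horizon_feasB k dl_gt0.
apply: le_trans (ereal_inf_lbound _) _; first by exists qP.
rewrite lee_fin; apply: (le_trans cost_le).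
have sum_le : \sum_s viter k s <= \sum_s L s + e1 * N.
  rewrite /N -sumr_const mulr_sumr -big_split; apply: ler_sum => s _.
  by rewrite mulr1 viter_le.
have dl_k : dl * k%:R * N <= e1 * N.
  rewrite ler_wpM2r // /dl mulrAC ler_pdivrMr ?ltr_pwDr //; nra.
have e_split : e = 2 * N * e1 + e1 by rewrite /e1; field; lra.
lra.
Qed.

End StationaryPolicy.

End RobustBellman.

Unset Implicit Arguments.
Theorem mainTheorem3 (R : realType) (S Act : finType) (A : S -> {set Act})
  (c : S -> Act -> R) (Phat : S -> Act -> S -> R)
  (D : (S -> R) -> (S -> R) -> R) (eps : S -> Act -> R) :
  (forall s a, 0 <= c s a /\ c s a <= 1) ->
  (forall s a, subdist (Phat s a)) ->
  (forall p p', nonneg_vec p -> nonneg_vec p' -> 0 <= D p p') ->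
  jointly_convex D ->
  (forall p, nonneg_vec p -> D p p = 0) ->
  pos_homogeneous D ->
  (forall s a, 0 < eps s a) ->
  LP_feasible A Phat ->
  valueA A c Phat D eps = valueB A c Phat D eps.
Proof.
move=> c_bounds Phat_sub _ D_conv D_diag D_hom eps_gt0 [q0 q0_occ].
have c_ge0 s a : 0 <= c s a by case: (c_bounds s a).
have eps_ge0 s a : 0 <= eps s a by exact/ltW.
have A_nonempty := occupancy_actions_nonempty q0_occ (fun s a => (Phat_sub s a).1).
have visits0_ge0 s : 0 <= visits0 A q0 s.
  exact: le_trans ler01 (visits0_ge1 Phat_sub q0_occ s).
have [w1 w1_ge0 w1_fix] := nonneg_fixpoint (Kpi_ge0 Phat_sub q0_occ) visits0_ge0
  (visits0_fixpoint Phat_sub q0_occ) (fun _ => ler01).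
have [J J_ge0 J_fix] := nonneg_fixpoint (Kpi_ge0 Phat_sub q0_occ) visits0_ge0
  (visits0_fixpoint Phat_sub q0_occ) (cpi_ge0 c_ge0 Phat_sub q0_occ).
apply/le_anti/andP; split; first exact: valueA_le_valueB.
exact: (valueB_le_valueA c_ge0 Phat_sub D_conv D_diag D_hom eps_ge0 A_nonempty q0_occ
  J_ge0 J_fix w1_ge0 w1_fix).
Qed.
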